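(* Let $N_\mathrm{T},N_\mathrm{R},N_\mathrm{S}$ be positive integers, let $\mathbf{H}_\mathrm{D}\in\mathbb{C}^{N_\mathrm{R}\times N_\mathrm{T}}$, $\mathbf{H}_\mathrm{B}\in\mathbb{C}^{N_\mathrm{R}\times N_\mathrm{S}}$, $\mathbf{H}_\mathrm{F}\in\mathbb{C}^{N_\mathrm{S}\times N_\mathrm{T}}$, and for a scattering matrix $\mathbf{\Theta}\in\mathbb{C}^{N_\mathrm{S}\times N_\mathrm{S}}$ let $\mathbf{H}(\mathbf{\Theta})=\mathbf{H}_\mathrm{D}+\mathbf{H}_\mathrm{B}\mathbf{\Theta}\mathbf{H}_\mathrm{F}$. A BD-RIS may achieve a larger or a smaller MIMO DoF than a D-RIS. Precisely: (i) there exist $N_\mathrm{T},N_\mathrm{R},N_\mathrm{S}$ and channels $\mathbf{H}_\mathrm{D},\mathbf{H}_\mathrm{B},\mathbf{H}_\mathrm{F}$ such that $\max_{\mathbf{\Theta}\text{ BD}}\mathrm{DoF}(\mathbf{H}(\mathbf{\Theta}))>\max_{\mathbf{\Theta}\text{ D}}\mathrm{DoF}(\mathbf{H}(\mathbf{\Theta}))$; and (ii) there exist $N_\mathrm{T},N_\mathrm{R},N_\mathrm{S}$ and channels such that $\min_{\mathbf{\Theta}\text{ BD}}\mathrm{DoF}(\mathbf{H}(\mathbf{\Theta}))<\min_{\mathbf{\Theta}\text{ D}}\mathrm{DoF}(\mathbf{H}(\mathbf{\Theta}))$, where ''BD'' ranges over all unitary $\mathbf{\Theta}\in\mathbb{U}^{N_\mathrm{S}\times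 N_\mathrm{S}}$ (fully-connected BD-RIS) and ''D'' over all diagonal $\mathbf{\Theta}=\mathrm{diag}(e^{\jmath\theta_1},\ldots,e^{\jmath\theta_{N_\mathrm{S}}})$, $\theta_i\in\mathbb{R}$ (D-RIS).
   Context: $\mathbb{U}^{n\times n}$ denotes the set of $n\times n$ complex unitary matrices. The degrees of freedom of a matrix $\mathbf{H}$ are $\mathrm{DoF}(\mathbf{H})=\lim_{\rho\to\infty}\frac{\log\det(\mathbf{I}+\rho\mathbf{H}\mathbf{H}^\mathsf{H})}{\log\rho}$ (the number of parallel streams supported at asymptotically high SNR $\rho$). A diagonal RIS (D-RIS) has diagonal scattering matrix with unit-modulus diagonal entries; a fully-connected beyond-diagonal RIS (BD-RIS) has an arbitrary unitary scattering matrix. *)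

From HB Require Import structures.
From mathcomp Require Import all_boot all_order all_algebra.
From mathcomp Require Import all_classical all_reals all_analysis.
From mathcomp Require Import complex.
Set Implicit Arguments. Unset Strict Implicit. Unset Printing Implicit Defensive.
Import Order.TTheory GRing.Theory Num.Theory numFieldTopology.Exports numFieldNormedType.Exports.
Local Open Scope classical_set_scope.
Local Open Scope ring_scope.

Section Defs.
Variable R : realType.
Local Notation C := R[i].

Definition ctmx m n (A : 'M[C]_(m, n)) : 'M[C]_(n, m) :=
  \matrix_(i, j) conjc (A j i).

Definition unitary_mx n (Th : 'M[C]_n) : Prop :=
  Th *m ctmx Th = 1%:M /\ ctmx Th *m Th = 1%:M.

Definition diag_ris n (Th : 'M[C]_n) : Prop :=
  exists theta : 'I_n -> R,
    Th = diag_mx (\row_k (cos (theta k) +i* sin (theta k))%C).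

(* DoF(H) = lim_{rho -> +oo} log det(I + rho H H^H) / log rho.
   det(I + rho H H^H) is a (positive) real number; we take its real part. *)
Definition DoF m n (H : 'M[C]_(m, n)) : R :=
  lim ((fun rho : R =>
          ln (complex.Re (\det (1%:M + (rho%:C)%C *: (H *m ctmx H))))
          / ln rho) x @[x --> +oo%R]).

Definition Heff NT NR NS (HD : 'M[C]_(NR, NT)) (HB : 'M[C]_(NR, NS))
  (HF : 'M[C]_(NS, NT)) (Th : 'M[C]_NS) : 'M[C]_(NR, NT) :=
  HD + HB *m Th *m HF.
End Defs.

(** The two-element RIS channel H(Θ) = H_D + [1 0] Θ [0 1]^T reads off the
    off-diagonal entry Θ₀₁ of the scattering matrix.  Every diagonal Θ
    leaves H(Θ) = H_D, whereas the swap permutation, which is unitary, gives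
    H(Θ) = H_D + 1.  For the scalar channel, DoF 0 = 0 and DoF of a unimodular
    scalar is 1, since ln(1 + ρ)/ln ρ → 1.  Taking H_D = 0 makes the BD-RIS
    strictly better than every D-RIS; taking H_D = -1 makes it strictly
    worse. *)

From HB Require Import structures.
From mathcomp Require Import all_boot all_order all_algebra.
From mathcomp Require Import all_classical all_reals all_analysis.
From mathcomp Require Import complex fingroup perm.
Import Order.TTheory GRing.Theory Num.Theory.
Import numFieldTopology.Exports numFieldNormedType.Exports.
Local Open Scope classical_set_scope.
Local Open Scope ring_scope.

Section LogRatio.
Context {R : realType}.

Lemma ln1D_div_ln_bound (x : R) :
  expR 1 <= x -> 0 <= ln (1 + x) / ln x - 1 <= x^-1.
Proof.
move=> ex; have x0 : 0 < x by apply: lt_le_trans ex; rewrite expR_gt0.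
have lnx1 : 1 <= ln x by rewrite -(@expRK R 1) ler_ln ?posrE ?expR_gt0.
have lnx0 : 0 < ln x by apply: lt_le_trans lnx1.
have lnD : ln (1 + x) = ln x + ln (1 + x^-1).
  rewrite -lnM ?posrE ?addr_gt0 ?invr_gt0 //.
  by rewrite mulrDr mulr1 mulfV ?gt_eqF // addrC.
have -> : ln (1 + x) / ln x - 1 = ln (1 + x^-1) / ln x.
  by rewrite lnD mulrDl mulfV ?gt_eqF // addrC addKr.
have lnV_ge0 : 0 <= ln (1 + x^-1) by rewrite ln_ge0 // lerDl invr_ge0 ltW.
have ln_le : ln (1 + x^-1) <= x^-1.
  by apply: le_ln1Dx; apply: lt_le_trans (@ltrN10 R) _; rewrite invr_ge0 ltW.
rewrite divr_ge0 ?(ltW lnx0) //=.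
by rewrite ler_pdivrMr // (le_trans ln_le) // ler_peMr // invr_ge0 ltW.
Qed.

Lemma ln1D_div_ln_cvg : ln (1 + x) / ln x @[x --> +oo] --> (1 : R).
Proof.
apply/cvgrPdist_le => /= eps eps0; near=> x.
have ex : expR 1 <= x by near: x; apply: nbhs_pinfty_ge; rewrite num_real.
have xe : eps^-1 <= x by near: x; apply: nbhs_pinfty_ge; rewrite num_real.
have /andP[ge0 le] := ln1D_div_ln_bound x ex.
rewrite distrC ger0_norm // (le_trans le) //.
by rewrite invf_ple ?posrE // (lt_le_trans _ xe) ?invr_gt0.
Unshelve. all: by end_near.
Qed.

End LogRatio.

Section DegreesOfFreedom.
Context {R : realType}.
Local Notation C := R[i].

Lemma ctmx_scalar n (a : C) : ctmx (a%:M : 'M[C]_n) = (conjc a)%:M.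
Proof. by apply/matrixP => i j; rewrite !mxE rmorphMn eq_sym. Qed.

Lemma scalar_mx_coisometry n (c : C) :
  c * conjc c = 1 -> (c%:M : 'M[C]_n) *m ctmx c%:M = 1%:M.
Proof. by move=> cc; rewrite ctmx_scalar -scalar_mxM cc. Qed.

Lemma DoF0 m n : DoF (0 : 'M[C]_(m, n)) = 0.
Proof.
rewrite /DoF; under eq_fun do rewrite mul0mx scaler0 addr0 det1 ln1 mul0r.
exact: lim_cst.
Qed.

Lemma DoF_coisometry m n (H : 'M[C]_(m, n)) :
  H *m ctmx H = 1%:M -> DoF H = m%:R.
Proof.
move=> HH; apply: cvg_lim => //.
have /(cvgMn (n := m)) := (@ln1D_div_ln_cvg R).
apply: cvg_trans; apply: near_eq_cvg; near=> rho.
have rho0 : 0 < rho by near: rho; apply: nbhs_pinfty_gt; rewrite num_real.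
rewrite /= HH scalemx1 -raddfD det_scalar.
have -> : (1 + rho%:C)%C ^+ m = ((1 + rho) ^+ m)%:C%C.
  by rewrite rmorphXn rmorphD rmorph1.
by rewrite /= lnXn ?addr_gt0 // mulrnAl.
Unshelve. all: by end_near.
Qed.
End DegreesOfFreedom.

Lemma delta_mx_mulmx_delta (T : pzRingType) m n (A : 'M[T]_(m, n))
    (i : 'I_m) (j : 'I_n) :
  delta_mx 0 i *m A *m delta_mx j 0 = (A i j)%:M :> 'M[T]_1.
Proof. by rewrite -rowE -colE; apply/matrixP => k l; rewrite !ord1 !mxE. Qed.

Section Scattering.
Context {R : realType}.
Local Notation C := R[i].

Lemma diag_ris_offdiag n (Th : 'M[C]_n) i j :
  diag_ris Th -> i != j -> Th i j = 0.
Proof. by move=> [theta ->] ij; rewrite mxE (negPf ij). Qed.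

Lemma diag_ris1 n : diag_ris (1%:M : 'M[C]_n).
Proof.
exists (fun _ => 0); rewrite cos0 sin0 -diag_const_mx.
by congr diag_mx; apply/rowP => k; rewrite !mxE.
Qed.

Lemma ctmx_perm_mx n (s : 'S_n) : ctmx (perm_mx s : 'M[C]_n) = (perm_mx s)^T.
Proof. by apply/matrixP => i j; rewrite !mxE conjc_nat. Qed.

Lemma unitary_perm_mx n (s : 'S_n) : unitary_mx (perm_mx s : 'M[C]_n).
Proof.
by rewrite /unitary_mx ctmx_perm_mx tr_perm_mx -!perm_mxM mulgV mulVg perm_mx1.
Qed.

Lemma perm_mx_tperm n (i j : 'I_n) : (perm_mx (tperm i j) : 'M[C]_n) i j = 1.
Proof. by rewrite !mxE tpermL eqxx. Qed.

Lemma Heff_delta_mx n (HD : 'M[C]_1) (Th : 'M[C]_n) i j :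
  Heff HD (delta_mx 0 i) (delta_mx j 0) Th = HD + (Th i j)%:M.
Proof. by rewrite /Heff delta_mx_mulmx_delta. Qed.

End Scattering.

Theorem proposition1 (R : realType) :
  (* (i) max over BD-RIS of DoF > max over D-RIS of DoF *)
  (exists (NT NR NS : nat) (HD : 'M[R[i]]_(NR.+1, NT.+1))
          (HB : 'M[R[i]]_(NR.+1, NS.+1)) (HF : 'M[R[i]]_(NS.+1, NT.+1)),
      (exists ThBD : 'M[R[i]]_NS.+1, unitary_mx ThBD /\
         (exists ThD0 : 'M[R[i]]_NS.+1, diag_ris ThD0 /\
            forall ThD, diag_ris ThD ->
              DoF (Heff HD HB HF ThD) <= DoF (Heff HD HB HF ThD0)) /\
         forall ThD : 'M[R[i]]_NS.+1, diag_ris ThD ->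
           DoF (Heff HD HB HF ThD) < DoF (Heff HD HB HF ThBD)))
  /\
  (* (ii) min over BD-RIS of DoF < min over D-RIS of DoF *)
  (exists (NT NR NS : nat) (HD : 'M[R[i]]_(NR.+1, NT.+1))
          (HB : 'M[R[i]]_(NR.+1, NS.+1)) (HF : 'M[R[i]]_(NS.+1, NT.+1)),
      (exists ThBD : 'M[R[i]]_NS.+1, unitary_mx ThBD /\
         (exists ThD0 : 'M[R[i]]_NS.+1, diag_ris ThD0 /\
            forall ThD, diag_ris ThD ->
              DoF (Heff HD HB HF ThD0) <= DoF (Heff HD HB HF ThD)) /\
         forall ThD : 'M[R[i]]_NS.+1, diag_ris ThD ->
           DoF (Heff HD HB HF ThBD) < DoF (Heff HD HB HF ThD))).
Proof.
pose HB : 'M[R[i]]_(1, 2) := delta_mx 0 0; pose HF : 'M[R[i]]_(2, 1) := delta_mx 1 0.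
pose swap : 'M[R[i]]_2 := perm_mx (tperm 0 1).
have D1 : diag_ris (1%:M : 'M[R[i]]_2) := diag_ris1 2.
have Heff_diag HD Th : diag_ris Th -> Heff HD HB HF Th = HD.
  by move=> dTh; rewrite Heff_delta_mx diag_ris_offdiag // raddf0 addr0.
have Heff_swap HD : Heff HD HB HF swap = HD + 1%:M.
  by rewrite Heff_delta_mx perm_mx_tperm.
have DoF_unit (c : R[i]) : c * conjc c = 1 -> DoF (c%:M : 'M[R[i]]_1) = 1.
  by move=> cc; apply: DoF_coisometry; apply: scalar_mx_coisometry.
split.
- exists 0%N, 0%N, 1%N, 0, HB, HF, swap; split; first exact: unitary_perm_mx.
  split; first by exists 1%:M; split => [|Th /Heff_diag ->]; rewrite ?(Heff_diag _ _ D1).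
  move=> Th /Heff_diag ->; rewrite Heff_swap add0r DoF0 DoF_unit ?ltr01 //.
  by rewrite conjc1 mulr1.
- exists 0%N, 0%N, 1%N, (-1)%:M, HB, HF, swap; split; first exact: unitary_perm_mx.
  split; first by exists 1%:M; split => [|Th /Heff_diag ->]; rewrite ?(Heff_diag _ _ D1).
  move=> Th /Heff_diag ->; rewrite Heff_swap -raddfD addNr raddf0 DoF0 DoF_unit ?ltr01 //.
  by rewrite rmorphN1 mulrNN mulr1.
Qed.
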